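(* Let $c\in[0,1/2]$, $\mu\in[-1+c,1-c]^n$, $d\in\mathbb{N}$, $\beta>0$, and let $f:\{-1,1\}^n\to\{-1,1\}$ be computed by a decision tree of size $s$. Then $$\sum_{S\subseteq N:\ |\hat f(S,\mu)|\geq\beta \text{ and } |S|\leq d}\hat f^2(S,\mu)\;\geq\; 1-\Big(4(1-c/2)^d s+2^{d+2}\beta\Big).$$
   Context: $N=\{1,\ldots,n\}$. For $\mu\in[-1,1]^n$, $\mathcal{D}_\mu$ is the product distribution on $\{-1,1\}^n$ with independent coordinates and $\mathbb{E}_{x\sim\mathcal{D}_\mu}[x_i]=\mu_i$. Define $z_i(x,\mu)=(x_i-\mu_i)/\sqrt{1-\mu_i^2}$, $z_S(x,\mu)=\prod_{i\in S}z_i(x,\mu)$, and $\hat f(S,\mu)=\mathbb{E}_{x\sim\mathcal{D}_\mu}[f(x)z_S(x,\mu)]$. A decision tree over $\{-1,1\}^n$ is a rooted binary tree whose internal nodes are labeled by indices $i\in N$, with two outgoing edges labeled $1$ and $-1$, and leaves labeled $\pm1$, no index appearing twice on any root-to-leaf path; on input $x$ one follows at a node labeled $i$ the edge labeled $x_i$ and outputs the label of the leaf reached. Its size is its number of leaves. *)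

From HB Require Import structures.
From mathcomp Require Import all_boot all_order all_algebra.
From mathcomp Require Import reals.
Set Implicit Arguments. Unset Strict Implicit. Unset Printing Implicit Defensive.
Import Order.TTheory GRing.Theory Num.Theory.
Local Open Scope ring_scope.

(* A point of {-1,1}^n is encoded as x : {ffun 'I_n -> bool},
   with true standing for 1 and false for -1. *)
Definition sgn {R : realType} (b : bool) : R := if b then 1 else -1.

Section Defs.
Variable R : realType.
Variable n : nat.

Definition cube := {ffun 'I_n -> bool}.

Definition Dmu (mu : 'I_n -> R) (x : cube) : R :=
  \prod_(i < n) ((1 + sgn (x i) * mu i) / 2).

Definition zi (x : cube) (mu : 'I_n -> R) (i : 'I_n) : R :=
  (sgn (x i) - mu i) / Num.sqrt (1 - mu i ^+ 2).

Definition zS (x : cube) (mu : 'I_n -> R) (S : {set 'I_n}) : R :=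
  \prod_(i in S) zi x mu i.

Definition fhat (f : cube -> R) (S : {set 'I_n}) (mu : 'I_n -> R) : R :=
  \sum_(x : cube) Dmu mu x * (f x * zS x mu S).

Inductive dtree : Type :=
| Leaf of bool
| Node of 'I_n & dtree & dtree.

Fixpoint dt_eval (t : dtree) (x : cube) : R :=
  match t with
  | Leaf b => sgn b
  | Node i t1 tm1 => if x i then dt_eval t1 x else dt_eval tm1 x
  end.

Fixpoint dt_wf_aux (seen : seq 'I_n) (t : dtree) : bool :=
  match t with
  | Leaf _ => true
  | Node i t1 tm1 => (i \notin seen) && dt_wf_aux (i :: seen) t1
                     && dt_wf_aux (i :: seen) tm1
  end.

Definition dt_wf (t : dtree) : bool := dt_wf_aux [::] t.

Fixpoint dt_size (t : dtree) : nat :=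
  match t with
  | Leaf _ => 1
  | Node _ t1 tm1 => dt_size t1 + dt_size tm1
  end.

End Defs.

From HB Require Import structures.
From mathcomp Require Import all_boot all_order all_algebra.
From mathcomp Require Import reals.
From mathcomp Require Import ring lra.
Set Implicit Arguments. Unset Strict Implicit. Unset Printing Implicit Defensive.
Import Order.TTheory GRing.Theory Num.Theory.
Local Open Scope ring_scope.

(* Cut the tree at depth d, letting every node reached at depth d output 1.
   The cut tree g differs from f only on inputs that reach depth d, which
   happens with probability at most s (1 - c/2)^d, and there |f - g| <= 2;
   hence sum_S (fhat f S - ghat S)^2 = E[(f - g)^2] <= 4 s (1 - c/2)^d.
   Writing 1[x_i = b] in the basis {1, z_i} shows that ghat vanishes above
   degree d and that sum_S |ghat S| <= 2^d.  A coefficient S missed by the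
   sum is either of degree > d, where ghat S = 0, or has |fhat S| < beta,
   where fhat S^2 <= (fhat S - ghat S)^2 + 2 beta |ghat S|; summing and using
   Parseval (sum_S fhat S^2 = 1) gives the bound. *)

Lemma heavy_low_degree_mass (R : realType) (I : finType) (w a : I -> R)
    (deg : I -> nat) (d : nat) (beta A E : R) :
  0 <= beta ->
  \sum_i (w i - a i) ^+ 2 <= E -> \sum_i `|a i| <= A ->
  (forall i, (d < deg i)%N -> a i = 0) ->
  \sum_(i | (beta <= `|w i|) && (deg i <= d)%N) w i ^+ 2
    >= \sum_i w i ^+ 2 - (E + 2 * beta * A).
Proof.
move=> beta0 hE hA ha.
pose P i := (beta <= `|w i|) && (deg i <= d)%N.
have missed i : ~~ P i -> w i ^+ 2 <= (w i - a i) ^+ 2 + 2 * beta * `|a i|.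
  rewrite negb_and -ltNge -ltnNge => /orP[small|/ha ->]; last first.
    by rewrite subr0 normr0 mulr0 addr0.
  have wa : w i * a i <= beta * `|a i|.
    by rewrite (le_trans (ler_norm _)) // normrM ler_wpM2r // ltW.
  have := sqr_ge0 (a i); nra.
have rest : \sum_(i | ~~ P i) w i ^+ 2 <= E + 2 * beta * A.
  apply: (le_trans (ler_sum _ missed)).
  apply: (@le_trans _ _ (\sum_i ((w i - a i) ^+ 2 + 2 * beta * `|a i|))).
    rewrite [leRHS](bigID P) /= lerDr.
    by apply: sumr_ge0 => i _; rewrite addr_ge0 ?sqr_ge0 ?mulr_ge0.
  by rewrite big_split /= -mulr_sumr lerD // ler_wpM2l // mulr_ge0.
rewrite (bigID P) /=; lra.
Qed.

Lemma norm_branch_le (R : realType) (s m a1 a0 : R) : 0 <= s -> -1 < m < 1 ->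
  `|s / 2 * (a1 - a0)| + `|((1 + m) * a1 + (1 - m) * a0) / 2| <=
  (s + 1 + m) / 2 * `|a1| + (s + 1 - m) / 2 * `|a0|.
Proof.
move=> s0 /andP[m1 m2].
have odd : `|s / 2 * (a1 - a0)| <= s / 2 * (`|a1| + `|a0|).
  by rewrite normrM ger0_norm ?divr_ge0 // ler_wpM2l ?divr_ge0 // ler_normB.
have even : `|(1 + m) * a1 + (1 - m) * a0| <= (1 + m) * `|a1| + (1 - m) * `|a0|.
  apply: (le_trans (ler_normD _ _)).
  by rewrite !normrM (ger0_norm (x := 1 + m)) ?(ger0_norm (x := 1 - m)); lra.
have -> : (s + 1 + m) / 2 * `|a1| + (s + 1 - m) / 2 * `|a0| =
  s / 2 * (`|a1| + `|a0|) + ((1 + m) * `|a1| + (1 - m) * `|a0|) / 2 by ring.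
by rewrite lerD // normrM [`|2^-1|]ger0_norm ?invr_ge0 // ler_wpM2r ?invr_ge0.
Qed.

Lemma sumr_set_split (R : realType) (n : nat) (i : 'I_n) (F : {set 'I_n} -> R) :
  \sum_(S : {set 'I_n}) F S = \sum_(S : {set 'I_n} | i \notin S) (F (i |: S) + F S).
Proof.
rewrite (bigID (fun S : {set 'I_n} => i \in S)) /= big_split /=; congr (_ + _).
rewrite (reindex_onto (fun S : {set 'I_n} => i |: S) (fun S => S :\ i)) /=;
  last by move=> S; apply: setD1K.
apply: eq_bigl => S; rewrite setU11 /=.
by apply/eqP/idP => [<-|/setU1K //]; rewrite setD11.
Qed.

Lemma sum_cube_prod (R : realType) (n : nat) (F : 'I_n -> bool -> R) :
  \sum_(x : cube n) \prod_i F i (x i) = \prod_i (F i true + F i false).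
Proof. by rewrite -bigA_distr_bigA; apply: eq_bigr => i _; rewrite big_bool. Qed.

Lemma sum_subsets_prod (R : realType) (n : nat) (a : 'I_n -> R) :
  \sum_(S : {set 'I_n}) \prod_(i in S) a i = \prod_i (1 + a i).
Proof.
under [LHS]eq_bigr do rewrite big_mkcond.
under [RHS]eq_bigr do rewrite addrC.
rewrite -(sum_cube_prod (fun i (b : bool) => if b then a i else 1)).
rewrite (reindex (fun x : cube n => [set i | x i])) /=; last first.
  apply: onW_bij; exists (fun S : {set 'I_n} => [ffun i => i \in S]).
    by move=> x; apply/ffunP => i; rewrite ffunE inE.
  by move=> S; apply/setP => i; rewrite inE ffunE.
by apply: eq_bigr => x _; apply: eq_bigr => i _; rewrite inE.
Qed.

Lemma dt_size_gt0 n (t : dtree n) : (0 < dt_size t)%N.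
Proof. by elim: t => //= i t1 h1 t0 _; rewrite addn_gt0 h1. Qed.

Lemma dt_eval_sgn (R : realType) n (t : dtree n) x : exists b, dt_eval R t x = sgn b.
Proof. by elim: t => [b|i t1 h1 t0 h0] /=; [exists b | case: (x i)]. Qed.

Section ProductFourier.
Variables (R : realType) (n : nat) (mu : 'I_n -> R).
Hypothesis mu_bounded : forall i, -1 < mu i < 1.

Definition sdev i : R := Num.sqrt (1 - mu i ^+ 2).
Definition pcoord i (b : bool) : R := (1 + sgn b * mu i) / 2.
Definition zcoord i (b : bool) : R := (sgn b - mu i) / sdev i.

Lemma DmuE x : Dmu mu x = \prod_i pcoord i (x i).
Proof. by []. Qed.

Lemma ziE x i : zi x mu i = zcoord i (x i).
Proof. by []. Qed.

Lemma var_gt0 i : 0 < 1 - mu i ^+ 2.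
Proof. by have /andP[? ?] := mu_bounded i; nra. Qed.

Lemma sdev_gt0 i : 0 < sdev i.
Proof. by rewrite sqrtr_gt0 var_gt0. Qed.

Lemma sdev_sq i : sdev i ^+ 2 = 1 - mu i ^+ 2.
Proof. by rewrite sqr_sqrtr // ltW // var_gt0. Qed.

Lemma sdev_le1 i : sdev i <= 1.
Proof. by have := sdev_sq i; have := sdev_gt0 i; nra. Qed.

Lemma pcoord_gt0 i b : 0 < pcoord i b.
Proof. by have /andP[? ?] := mu_bounded i; rewrite /pcoord; case: b => /=; lra. Qed.

Lemma pcoord_sum i : pcoord i true + pcoord i false = 1.
Proof. by rewrite /pcoord /=; lra. Qed.

Lemma zcoord_mean i : pcoord i true * zcoord i true + pcoord i false * zcoord i false = 0.
Proof. by have := sdev_gt0 i; rewrite /pcoord /zcoord /= => ?; field; rewrite gt_eqF. Qed.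

Lemma zcoord_var i :
  pcoord i true * zcoord i true ^+ 2 + pcoord i false * zcoord i false ^+ 2 = 1.
Proof.
have := var_gt0 i; rewrite /pcoord /zcoord /= !expr_div_n sdev_sq => ?.
by field; rewrite gt_eqF.
Qed.

Lemma zcoord_kernel_eq i b : 1 + zcoord i b * zcoord i b = (pcoord i b)^-1.
Proof.
have /andP[? ?] := mu_bounded i.
rewrite /pcoord /zcoord -expr2 !expr_div_n sdev_sq.
have -> : 1 - mu i ^+ 2 = (1 - mu i) * (1 + mu i) by ring.
by rewrite invf_div; case: b => /=; field; rewrite !gt_eqF //; lra.
Qed.

Lemma zcoord_kernel_neq i b : 1 + zcoord i b * zcoord i (~~ b) = 0.
Proof.
have -> : zcoord i b * zcoord i (~~ b) = - (1 - mu i ^+ 2) / sdev i ^+ 2.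
  by have := sdev_gt0 i; rewrite /zcoord; case: b => /= ?; field; rewrite gt_eqF.
by rewrite sdev_sq; field; rewrite gt_eqF // var_gt0.
Qed.

Lemma Dmu_sum1 : \sum_(x : cube n) Dmu mu x = 1.
Proof. by rewrite (sum_cube_prod pcoord) big1 // => i _; rewrite pcoord_sum. Qed.

Lemma Dmu_gt0 x : 0 < Dmu mu x.
Proof. by apply: prodr_gt0 => i _; apply: pcoord_gt0. Qed.

Lemma zS_orthonormal S T :
  \sum_(x : cube n) Dmu mu x * (zS x mu S * zS x mu T) = (S == T)%:R.
Proof.
pose z i (U : {set 'I_n}) b := if i \in U then zcoord i b else 1.
rewrite (eq_bigr (fun x : cube n => \prod_i (pcoord i (x i) * (z i S (x i) * z i T (x i)))));
  last by move=> x _; rewrite DmuE /zS [\prod_(i in S) _]big_mkcond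
                           [\prod_(i in T) _]big_mkcond -!big_split.
rewrite (sum_cube_prod (fun i b => pcoord i b * (z i S b * z i T b))) /z.
have [->|neST] := eqVneq S T.
  apply: big1 => i _; case: (i \in T); rewrite ?mulr1 ?pcoord_sum //.
  by rewrite -!expr2 zcoord_var.
have [i hi] : exists i, (i \in S) != (i \in T).
  apply/existsP; apply: contraR neST => /existsPn h; apply/eqP/setP => j.
  by have := h j; rewrite negbK => /eqP.
rewrite (bigD1 i) //=.
by move: hi; case: (i \in S); case: (i \in T) => //= _;
  rewrite ?mulr1 ?mul1r zcoord_mean mul0r.
Qed.

Lemma zS_kernel x y :
  \sum_(S : {set 'I_n}) zS x mu S * zS y mu S = if x == y then (Dmu mu x)^-1 else 0.
Proof.
rewrite (eq_bigr (fun S : {set 'I_n} => \prod_(i in S) (zcoord i (x i) * zcoord i (y i))));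
  last by move=> S _; rewrite /zS -big_split.
rewrite sum_subsets_prod.
have [->|nxy] := eqVneq x y.
  by rewrite DmuE -prodfV; apply: eq_bigr => i _; apply: zcoord_kernel_eq.
have [i hi] : exists i, x i != y i.
  apply/existsP; apply: contraR nxy => /existsPn h; apply/eqP/ffunP => j.
  by have := h j; rewrite negbK => /eqP.
rewrite (bigD1 i) //=.
have -> : y i = ~~ x i by move: hi; case: (x i); case: (y i).
by rewrite zcoord_kernel_neq mul0r.
Qed.

Lemma parseval (F : cube n -> R) :
  \sum_(S : {set 'I_n}) fhat F S mu ^+ 2 = \sum_(x : cube n) Dmu mu x * F x ^+ 2.
Proof.
rewrite (eq_bigr (fun S : {set 'I_n} => \sum_(x : cube n) \sum_(y : cube n)
    Dmu mu x * F x * Dmu mu y * F y * (zS x mu S * zS y mu S))); last first.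
  move=> S _; rewrite expr2 /fhat mulr_suml; apply: eq_bigr => x _.
  by rewrite mulr_sumr; apply: eq_bigr => y _; ring.
rewrite exchange_big; apply: eq_bigr => x _; rewrite exchange_big /=.
under eq_bigr do rewrite -mulr_sumr zS_kernel.
rewrite (bigD1 x) //= eqxx big1 => [|y /negbTE]; last by rewrite eq_sym => ->; rewrite mulr0.
by have := Dmu_gt0 x => ?; rewrite addr0; field; rewrite gt_eqF.
Qed.

Lemma fhat_expansion (F : cube n -> R) (a : {set 'I_n} -> R) :
  (forall x, F x = \sum_(S : {set 'I_n}) a S * zS x mu S) ->
  forall T, fhat F T mu = a T.
Proof.
move=> hF T; transitivity (\sum_(S : {set 'I_n}) \sum_(x : cube n)
    a S * (Dmu mu x * (zS x mu S * zS x mu T))).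
  rewrite exchange_big /fhat; apply: eq_bigr => x _.
  by rewrite hF !mulr_suml mulr_sumr; apply: eq_bigr => S _; ring.
under eq_bigr do rewrite -mulr_sumr zS_orthonormal.
rewrite (bigD1 T) //= eqxx mulr1 big1 ?addr0 // => S /negbTE ->; exact: mulr0.
Qed.

Lemma fhatB (F G : cube n -> R) T :
  fhat (fun x => F x - G x) T mu = fhat F T mu - fhat G T mu.
Proof. by rewrite /fhat -sumrB; apply: eq_bigr => x _; ring. Qed.

Lemma expansion_set0 v x :
  \sum_(S : {set 'I_n}) (if S == set0 then v else 0) * zS x mu S = v.
Proof.
rewrite (bigD1 set0) //= eqxx big1 ?addr0 => [|S /negbTE ->]; last exact: mul0r.
by rewrite /zS big_set0 mulr1.
Qed.

Lemma expansion_notin i (a : {set 'I_n} -> R) x :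
  (forall S : {set 'I_n}, i \in S -> a S = 0) ->
  \sum_(S : {set 'I_n} | i \notin S) a S * zS x mu S =
  \sum_(S : {set 'I_n}) a S * zS x mu S.
Proof.
move=> ha; rewrite [RHS](bigID (fun S : {set 'I_n} => i \in S)) /= [X in _ = X + _]big1 ?add0r //.
by move=> S /ha ->; rewrite mul0r.
Qed.

(* With leaf := sgn it approximates the
   tree; with leaf := 0 and cut := 1 it is the indicator of reaching depth k. *)
Fixpoint trunc_eval (leaf : bool -> R) (cut : R) (k : nat) (t : dtree n)
    (x : cube n) : R :=
  if k is k'.+1 then
    match t with
    | Leaf b => leaf b
    | Node i t1 t0 => if x i then trunc_eval leaf cut k' t1 x
                      else trunc_eval leaf cut k' t0 x
    end
  else cut.

(* Its Fourier coefficients, from 1[x_i = true] = (1 + mu_i)/2 + sdev_i/2 z_i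
   and 1[x_i = false] = (1 - mu_i)/2 - sdev_i/2 z_i. *)
Fixpoint trunc_coef (leaf : bool -> R) (cut : R) (k : nat) (t : dtree n)
    (S : {set 'I_n}) : R :=
  if k is k'.+1 then
    match t with
    | Leaf b => if S == set0 then leaf b else 0
    | Node i t1 t0 =>
      if i \in S then
        sdev i / 2 * (trunc_coef leaf cut k' t1 (S :\ i) - trunc_coef leaf cut k' t0 (S :\ i))
      else ((1 + mu i) * trunc_coef leaf cut k' t1 S
            + (1 - mu i) * trunc_coef leaf cut k' t0 S) / 2
    end
  else if S == set0 then cut else 0.

Lemma trunc_coef_seen leaf cut k t seen : dt_wf_aux seen t ->
  forall S : {set 'I_n}, has (fun j => j \in S) seen -> trunc_coef leaf cut k t S = 0.
Proof.
elim: k t seen => [|k IH] t seen /= wf S hS.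
  by case: eqP => // eS; move: hS; rewrite eS => /hasP[j _]; rewrite inE.
case: t wf => [b|i t1 t0] /=.
  by move=> _; case: eqP => // eS; move: hS; rewrite eS => /hasP[j _]; rewrite inE.
move=> /andP[/andP[ni w1] w0].
have [iS|iS] := boolP (i \in S).
  suff seenD1 : has (fun j => j \in S :\ i) (i :: seen).
    by rewrite (IH t1 (i :: seen)) // (IH t0 (i :: seen)) // subrr mulr0.
  move: hS => /hasP[j js jS]; apply/hasP; exists j; rewrite ?inE ?js ?orbT //.
  by rewrite jS andbT; apply: contraNneq ni => <-.
have seenS : has (fun j => j \in S) (i :: seen) by rewrite /= hS orbT.
by rewrite (IH t1 (i :: seen)) // (IH t0 (i :: seen)) // !mulr0 addr0 mul0r.
Qed.

Lemma trunc_coef_deg leaf cut k t (S : {set 'I_n}) :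
  (k < #|S|)%N -> trunc_coef leaf cut k t S = 0.
Proof.
elim: k t S => [|k IH] t S /= hk.
  by case: eqP => // eS; move: hk; rewrite eS cards0.
case: t => [b|i t1 t0] /=.
  by case: eqP => // eS; move: hk; rewrite eS cards0.
have [iS|iS] := boolP (i \in S).
  by rewrite !IH ?subrr ?mulr0 //; move: hk; rewrite (cardsD1 i S) iS.
by rewrite !IH ?mulr0 ?addr0 ?mul0r //; apply: ltnW.
Qed.

Lemma trunc_eval_expansion leaf cut k t seen : dt_wf_aux seen t ->
  forall x, trunc_eval leaf cut k t x =
            \sum_(S : {set 'I_n}) trunc_coef leaf cut k t S * zS x mu S.
Proof.
elim: k t seen => [|k IH] t seen /= wf x; first by rewrite expansion_set0.
case: t wf => [b|i t1 t0] /=; first by rewrite expansion_set0.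
move=> /andP[/andP[ni w1] w0].
set c1 := sdev i / 2 * zcoord i (x i) + (1 + mu i) / 2.
set c0 := (1 - mu i) / 2 - sdev i / 2 * zcoord i (x i).
rewrite (sumr_set_split i) (eq_bigr (fun S : {set 'I_n} =>
    c1 * (trunc_coef leaf cut k t1 S * zS x mu S) +
    c0 * (trunc_coef leaf cut k t0 S * zS x mu S))); last first.
  move=> S iS; rewrite setU11 setU1K // (negbTE iS).
  by rewrite /zS big_setU1 //= -/(zS x mu S) /c1 /c0 ziE; ring.
have notseen t' : dt_wf_aux (i :: seen) t' ->
    forall S : {set 'I_n}, i \in S -> trunc_coef leaf cut k t' S = 0.
  by move=> w S iS; apply: (trunc_coef_seen leaf cut k w); rewrite /= iS.
rewrite big_split /= -!mulr_sumr.
rewrite (@expansion_notin i _ x (notseen _ w1)) (@expansion_notin i _ x (notseen _ w0)).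
rewrite -(IH _ _ w1) -(IH _ _ w0) /c1 /c0 /zcoord.
by have := sdev_gt0 i; case: (x i) => /= ?; field; rewrite gt_eqF.
Qed.

Lemma trunc_coef_L1 leaf cut k t : (forall b, `|leaf b| <= 1) -> `|cut| <= 1 ->
  \sum_(S : {set 'I_n}) `|trunc_coef leaf cut k t S| <= 2 ^+ k.
Proof.
move=> hleaf hcut; elim: k t => [|k IH] t /=.
  rewrite (bigD1 set0) //= eqxx big1 ?addr0 // => S /negbTE ->; exact: normr0.
case: t => [b|i t1 t0] /=.
  rewrite (bigD1 set0) //= eqxx big1 ?addr0 => [|S /negbTE ->]; last exact: normr0.
  by apply: (le_trans (hleaf b)); apply: exprn_ege1; lra.
have /andP[m1 m2] := mu_bounded i; have := sdev_gt0 i; have := sdev_le1 i => ? ?.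
pose A1 S := `|trunc_coef leaf cut k t1 S|; pose A0 S := `|trunc_coef leaf cut k t0 S|.
apply: (@le_trans _ _ (\sum_(S : {set 'I_n})
   ((sdev i + 1 + mu i) / 2 * A1 S + (sdev i + 1 - mu i) / 2 * A0 S))).
  rewrite (sumr_set_split i) [leRHS](bigID (fun S : {set 'I_n} => i \notin S)) /=.
  rewrite -[leLHS]addr0 lerD //; last first.
    by apply: sumr_ge0 => S _; apply: addr_ge0; apply: mulr_ge0; rewrite /A1 /A0 //; lra.
  apply: ler_sum => S iS; rewrite setU11 setU1K // (negbTE iS).
  by apply: norm_branch_le; [apply: ltW | apply/andP].
rewrite big_split /= -!mulr_sumr exprS.
apply: (le_trans (lerD (ler_wpM2l _ (IH t1)) (ler_wpM2l _ (IH t0)))); try lra.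
have : (0 : R) < 2 ^+ k by apply: exprn_gt0; lra.
nra.
Qed.

Lemma trunc_coef_set0_le k t (r : R) : 0 <= r ->
  (forall i, (1 + mu i) / 2 <= r /\ (1 - mu i) / 2 <= r) ->
  trunc_coef (fun _ => 0) 1 k t set0 <= (dt_size t)%:R * r ^+ k.
Proof.
move=> r0 hr; elim: k t => [|k IH] t /=.
  by rewrite eqxx expr0 mulr1 ler1n dt_size_gt0.
case: t => [b|i t1 t0] /=; first by rewrite eqxx mulr_ge0 ?exprn_ge0.
rewrite in_set0 natrD.
have /andP[m1 m2] := mu_bounded i; have [r1 r0'] := hr i.
have := IH t1; have := IH t0.
set a1 := trunc_coef _ _ k t1 set0; set a0 := trunc_coef _ _ k t0 set0.
set y1 := (dt_size t1)%:R * r ^+ k; set y0 := (dt_size t0)%:R * r ^+ k => A0 A1.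
have y0_ge0 : 0 <= y0 by rewrite mulr_ge0 ?exprn_ge0.
have y1_ge0 : 0 <= y1 by rewrite mulr_ge0 ?exprn_ge0.
have h1 : (1 + mu i) * a1 <= (1 + mu i) * y1 by rewrite ler_wpM2l //; lra.
have h0 : (1 - mu i) * a0 <= (1 - mu i) * y0 by rewrite ler_wpM2l //; lra.
have -> : ((dt_size t1)%:R + (dt_size t0)%:R) * r ^+ k.+1 = r * y1 + r * y0.
  by rewrite /y1 /y0 exprS; ring.
nra.
Qed.

Lemma fhat_set0 (F : cube n -> R) : fhat F set0 mu = \sum_(x : cube n) Dmu mu x * F x.
Proof. by apply: eq_bigr => x _; rewrite /zS big_set0 mulr1. Qed.

Lemma trunc_eval_sq_err_le k t x :
  (dt_eval R t x - trunc_eval sgn 1 k t x) ^+ 2 <= 4 * trunc_eval (fun _ => 0) 1 k t x.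
Proof.
elim: k t => [|k IH] t; first by have [[] ->] := dt_eval_sgn R t x; rewrite /=; lra.
case: t => [b|i t1 t0] /=; first by rewrite subrr expr0n mulr0.
by case: (x i).
Qed.

Lemma dt_fhat_sq_sum (F : cube n -> R) t :
  (forall x, F x = dt_eval R t x) -> \sum_(S : {set 'I_n}) fhat F S mu ^+ 2 = 1.
Proof.
move=> hF; rewrite parseval -Dmu_sum1; apply: eq_bigr => x _.
by rewrite hF; have [[] ->] := dt_eval_sgn R t x; rewrite /= ?sqrrN expr1n mulr1.
Qed.

Lemma sum_fhat_trunc_sq_le (F : cube n -> R) t k (r : R) :
  dt_wf t -> (forall x, F x = dt_eval R t x) -> 0 <= r ->
  (forall i, (1 + mu i) / 2 <= r /\ (1 - mu i) / 2 <= r) ->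
  \sum_(S : {set 'I_n}) (fhat F S mu - trunc_coef sgn 1 k t S) ^+ 2
    <= 4 * ((dt_size t)%:R * r ^+ k).
Proof.
move=> wf hF r0 hr.
have coefE leaf cut : forall S, fhat (trunc_eval leaf cut k t) S mu = trunc_coef leaf cut k t S.
  exact: fhat_expansion (trunc_eval_expansion leaf cut k wf).
under eq_bigr do rewrite -coefE -fhatB.
rewrite parseval (le_trans _ (ler_wpM2l _ (trunc_coef_set0_le k t r0 hr))) //.
rewrite -coefE fhat_set0 mulr_sumr.
apply: ler_sum => x _; rewrite [leRHS]mulrCA ler_wpM2l ?(ltW (Dmu_gt0 x)) // hF.
exact: trunc_eval_sq_err_le.
Qed.

End ProductFourier.

Theorem lemma4 (R : realType) (n : nat) (c : R) (mu : 'I_n -> R) (d : nat)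
  (beta : R) (f : cube n -> R) (s : nat) (T : dtree n) :
  0 <= c -> c <= 1 / 2 ->
  (forall i, -1 + c <= mu i <= 1 - c) ->
  0 < beta ->
  dt_wf T -> dt_size T = s ->
  (forall x, f x = dt_eval R T x) ->
  \sum_(S : {set 'I_n} | (beta <= `|fhat f S mu|) && (#|S| <= d)%N)
     fhat f S mu ^+ 2
  >= 1 - (4 * (1 - c / 2) ^+ d * s%:R + 2 ^+ (d + 2) * beta).
Proof.
move=> c0 c_le mu_c beta0 wf size_T hf.
have s_ge1 : (1 : R) <= s%:R by rewrite ler1n -size_T dt_size_gt0.
have pow2_gt0 : (0 : R) < 2 ^+ d by apply: exprn_gt0; lra.
rewrite exprD expr2.
(* For c = 0 the bound is negative; splitting it off keeps mu away from -1
   and 1, where z_i is undefined. *)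
have [c_eq0 | c_neq0] := eqVneq c 0.
  have : 0 <= \sum_(S : {set 'I_n} | (beta <= `|fhat f S mu|) && (#|S| <= d)%N)
    fhat f S mu ^+ 2 by apply: sumr_ge0 => S _; apply: sqr_ge0.
  by rewrite c_eq0 mul0r subr0 expr1n; nra.
have c_gt0 : 0 < c by rewrite lt_neqAle eq_sym c_neq0.
have mu_bounded i : -1 < mu i < 1 by have /andP[? ?] := mu_c i; apply/andP; lra.
have r_ge0 : 0 <= 1 - c / 2 by lra.
have mu_r i : (1 + mu i) / 2 <= 1 - c / 2 /\ (1 - mu i) / 2 <= 1 - c / 2.
  by have /andP[? ?] := mu_c i; lra.
have L1 : \sum_(S : {set 'I_n}) `|trunc_coef mu sgn 1 d T S| <= 2 ^+ d.
  by apply: trunc_coef_L1 => // [[]|]; rewrite ?normrN normr1.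
have := heavy_low_degree_mass (w := fun S => fhat f S mu) (deg := fun S => #|S|)
  (ltW beta0) (sum_fhat_trunc_sq_le mu_bounded d wf hf r_ge0 mu_r) L1
  (@trunc_coef_deg _ _ mu sgn 1 d T).
rewrite (dt_fhat_sq_sum mu_bounded hf) size_T.
nra.
Qed.
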